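(* Let $V$ be a set of $n$ points with a dot-product similarity matrix $C$ (i.e. $C_{ij}=x_i\cdot x_j$ for unit vectors $x_i\in\mathbb{R}^d$) such that $0\le C_{ij}\le1$ for all $i,j$. Let $T$ be the (random) hierarchy produced by the top-down recursive partitioning procedure using the random-hyperplane splitting rule, and let $T^*$ be a minimizer of $\mathrm{cost}_V(\cdot)$. Then $\mathbb{E}[\mathrm{cost}_V(T)]=O(n)\cdot\mathrm{cost}_V(T^* )$, i.e. the random hyperplane partitioning has expected approximation ratio $O(n)$.
   Context: Hierarchical clustering cost (Dasgupta): for a rooted tree $T$ with leaf set $V$, $\mathrm{cost}_V(T)=\sum_{\{i,j\}}C_{ij}|\mathrm{leaves}(T[i\vee j])|$ over unordered pairs of elements of $V$, where $i\vee j$ is the lowest common ancestor of leaves $i,j$ and $T[u]$ the subtree rooted at $u$. Top-down procedure: for a point set $S$, return a leaf if $|S|=1$, otherwise split $S$ into two nonempty parts by the splitting rule and make the recursively built trees on the parts the children of the root. Random-hyperplane splitting rule on a set $\{v_1,\dots,v_\ell\}$: sample $h$ uniformly from the unit sphere $S^{d-1}$ (e.g. $h=y/\|y\|$ with $y\sim\mathcal N(0,I_d)$), and split the points according to whether $h\cdot v_i$ is at most the median of $\{h\cdot v_1,\dots,h\cdot v_\ell\}$. *)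

From HB Require Import structures.
From mathcomp Require Import all_boot all_order all_algebra.
From mathcomp Require Import all_classical all_reals all_analysis.
Set Implicit Arguments. Unset Strict Implicit. Unset Printing Implicit Defensive.
Import Order.TTheory GRing.Theory Num.Theory.
Local Open Scope ring_scope.

Inductive tree (T : Type) := Leaf of T | Node of seq (tree T).
Arguments Leaf {T}. Arguments Node {T}.

Fixpoint leaves {T} (t : tree T) : seq T :=
  match t with
  | Leaf i => [:: i]
  | Node ts => (fix lv (us : seq (tree T)) : seq T :=
                  match us with [::] => [::] | u :: us' => leaves u ++ lv us' end) ts
  end.

(* every internal node has at least one child (so all leaves of the tree are
   Leaf-labelled nodes) *)
Fixpoint wf_tree {T} (t : tree T) : bool :=
  match t with
  | Leaf _ => true
  | Node ts => ~~ nilp ts &&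
      (fix wl (us : seq (tree T)) : bool :=
         match us with [::] => true | u :: us' => wf_tree u && wl us' end) ts
  end.

Definition hierarchy (n : nat) (t : tree 'I_n) : bool :=
  wf_tree t && perm_eq (leaves t) (enum 'I_n).

(* |leaves(T[i v j])| : number of leaves of the subtree rooted at the lowest
   common ancestor of leaves i and j *)
Fixpoint lca_size {T : eqType} (t : tree T) (i j : T) : nat :=
  match t with
  | Leaf _ => 1
  | Node ts =>
      (fix go (us : seq (tree T)) : nat :=
         match us with
         | [::] => size (leaves t)
         | u :: us' => if (i \in leaves u) && (j \in leaves u)
                       then lca_size u i j else go us'
         end) ts
  end.

Definition cost {R : numDomainType} (n : nat) (C : 'I_n -> 'I_n -> R)
    (t : tree 'I_n) : R :=
  \sum_(i < n) \sum_(j < n | (i < j)%N) C i j * (lca_size t i j)%:R.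

Definition dot {R : realType} (d : nat) (u v : 'rV[R]_d) : R := (u *m v^T) 0 0.
Definition enorm {R : realType} (d : nat) (u : 'rV[R]_d) : R := Num.sqrt (dot u u).

Definition median {R : realType} (s : seq R) : R :=
  let t := sort <=%R s in
  let m := size t in
  if odd m then nth 0 t m./2
  else (nth 0 t m./2.-1 + nth 0 t m./2) / 2.

(* h = y / ||y|| with y ~ N(0, I_d); the part "at most the median" *)
Definition hyp_split {R : realType} (n d : nat) (x : 'I_n -> 'rV[R]_d)
    (y : 'rV[R]_d) (S : {set 'I_n}) : {set 'I_n} :=
  let h := (enorm y)^-1 *: y in
  let med := median [seq dot h (x i) | i <- enum S] in
  [set i in S | dot h (x i) <= med].

(* Expectation of g(y) for y ~ N(0, I_d), i.e. w.r.t. the product of d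
   independent standard normal laws, computed as an iterated integral. *)
Fixpoint gauss_iter {R : realType} (k : nat) (f : seq R -> \bar R) : \bar R :=
  match k with
  | 0 => f [::]
  | k'.+1 => (\int[normal_prob (0:R) 1]_t gauss_iter k' (fun l => f (t :: l)))%E
  end.

Definition gauss_expect {R : realType} (d : nat) (g : 'rV[R]_d -> \bar R) : \bar R :=
  gauss_iter d (fun l => g (\row_(i < d) nth 0 l i)).

Definition split_prob {R : realType} (n d : nat) (x : 'I_n -> 'rV[R]_d)
    (S A : {set 'I_n}) : \bar R :=
  gauss_expect (fun y => ((hyp_split x y S == A)%:R)%:E).

(* Law of the random tree produced by the top-down procedure on S, as a
   finitely supported distribution: list of (probability, tree) pairs.
   Splits at distinct nodes use independent hyperplanes.  k is fuel (k >= #|S|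
   suffices).  Events of probability zero (a part being empty, which requires
   ties) are omitted. *)
Fixpoint rtree_dist {R : realType} (n d : nat) (x : 'I_n -> 'rV[R]_d)
    (k : nat) (S : {set 'I_n}) : seq (\bar R * tree 'I_n) :=
  match k with
  | 0 => [::]
  | k'.+1 =>
    if #|S| == 1%N then
      match [pick i in S] with Some i => [:: (1%E, Leaf i)] | None => [::] end
    else
      flatten [seq [seq ((split_prob x S A * pt1.1 * pt2.1)%E,
                         Node [:: pt1.2; pt2.2])
                   | pt1 <- rtree_dist x k' A, pt2 <- rtree_dist x k' (S :\: A)]
              | A : {set 'I_n} <- enum (powerset S) & (0 < #|A| < #|S|)%N]
  end.

Definition dotC {R : realType} (n d : nat) (x : 'I_n -> 'rV[R]_d) :=
  fun i j : 'I_n => dot (x i) (x j).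

Definition expected_cost {R : realType} (n d : nat) (x : 'I_n -> 'rV[R]_d) : \bar R :=
  (\sum_(pt <- rtree_dist x n [set: 'I_n]) pt.1 * (cost (dotC x) pt.2)%:E)%E.

(* Since C >= 0 and the subtree below the lowest common ancestor of two
   leaves has at least one and at most n leaves, every hierarchy T on V
   satisfies
     sum_{i<j} C_ij <= cost_V(T) <= n * sum_{i<j} C_ij.
   The law of the random tree has nonnegative weights of total mass at most 1
   (the split probabilities of a set sum to at most 1, and the recursion
   multiplies them), so E[cost_V(T)] <= n * sum C <= n * cost_V(Tstar): the
   constant is c = 1, and only 0 <= C_ij is used.
   The split probabilities are Gaussian integrals of indicator functions whose
   measurability is never established, so monotonicity and superadditivity of
   the integral are derived directly from its definition as a supremum over
   simple functions. *)

From HB Require Import structures.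
From mathcomp Require Import all_boot all_order all_algebra.
From mathcomp Require Import all_classical all_reals all_analysis.
Set Implicit Arguments. Unset Strict Implicit. Unset Printing Implicit Defensive.
Import Order.TTheory GRing.Theory Num.Theory.
Local Open Scope ring_scope.

Section tree_induction.
Variable T : Type.

Fixpoint all_trees (P : tree T -> Prop) (ts : seq (tree T)) : Prop :=
  if ts is u :: us then P u /\ all_trees P us else True.

Fixpoint tree_nested_ind (P : tree T -> Prop) (PL : forall a, P (Leaf a))
    (PN : forall ts, all_trees P ts -> P (Node ts)) (t : tree T) : P t :=
  match t with
  | Leaf a => PL a
  | Node ts => PN ts ((fix F (us : seq (tree T)) : all_trees P us :=
      match us return all_trees P us with
      | [::] => I
      | u :: us' => conj (tree_nested_ind PL PN u) (F us')
      end) ts)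
  end.

Fixpoint gentree_of_tree (t : tree T) : GenTree.tree T :=
  match t with
  | Leaf a => GenTree.Leaf a
  | Node ts => GenTree.Node 0 (map gentree_of_tree ts)
  end.

Fixpoint tree_of_gentree (g : GenTree.tree T) : tree T :=
  match g with
  | GenTree.Leaf a => Leaf a
  | GenTree.Node _ gs => Node (map tree_of_gentree gs)
  end.

Lemma gentree_of_treeK : cancel gentree_of_tree tree_of_gentree.
Proof.
elim/tree_nested_ind => // ts IHts /=; congr Node.
by elim: ts IHts => //= u us IHus [-> /IHus ->].
Qed.

End tree_induction.

HB.instance Definition _ (T : eqType) :=
  Equality.copy (tree T) (can_type (@gentree_of_treeK T)).

Section lca_size.
Variables (T : eqType) (i j : T).

Definition lca_scan (dflt : nat) :=
  fix go (us : seq (tree T)) : nat :=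
    if us is u :: us' then
      if (i \in leaves u) && (j \in leaves u) then lca_size u i j else go us'
    else dflt.

Lemma lca_size_Node ts :
  lca_size (Node ts) i j = lca_scan (size (leaves (Node ts))) ts.
Proof. by []. Qed.

Lemma lca_size_gt0 t : i \in leaves t -> (0 < lca_size t i j)%N.
Proof.
elim/tree_nested_ind: t => // ts IHts it; rewrite lca_size_Node.
have : (0 < size (leaves (Node ts)))%N by case: (leaves _) it.
elim: ts IHts {it} (size _) => //= u us IHus [IHu IHus'] m m_gt0.
by case: ifP => [/andP[/IHu]|_] //; apply: IHus.
Qed.

Lemma lca_scan_le m us :
  all_trees (fun u => (lca_size u i j <= size (leaves u))%N) us ->
  (size (leaves (Node us)) <= m)%N -> (lca_scan m us <= m)%N.
Proof.
elim: us => //= u us IHus [IHu IHus'].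
rewrite size_cat => le_m.
case: ifP => _; last by apply: IHus => //; apply: leq_trans le_m; apply: leq_addl.
by apply: leq_trans IHu _; apply: leq_trans le_m; apply: leq_addr.
Qed.

Lemma lca_size_le_size_leaves t : (lca_size t i j <= size (leaves t))%N.
Proof. by elim/tree_nested_ind: t => // ts IHts; apply: lca_scan_le. Qed.
End lca_size.

Section ereal_sup_add.
Local Open Scope ereal_scope.
Variable R : realType.

Lemma ge0_ereal_supD_le (A B : set (\bar R)) (M : \bar R) :
  A 0 -> B 0 -> (forall a, A a -> 0 <= a) -> (forall b, B b -> 0 <= b) ->
  (forall a b, A a -> B b -> a + b <= M) ->
  ereal_sup A + ereal_sup B <= M.
Proof.
move=> A0 B0 A_ge0 B_ge0 leM.
have M_ge0 : 0 <= M by rewrite -(adde0 0); apply: leM.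
have [->|M_neq_y] := eqVneq M +oo; first exact: leey.
have M_fin : M \is a fin_num by rewrite ge0_fin_numE // ltey.
have B_fin b : B b -> b \is a fin_num.
  move=> Bb; rewrite ge0_fin_numE ?B_ge0 //; apply: le_lt_trans (_ : M < +oo).
    by rewrite -(add0e b); apply: leM.
  by rewrite ltey.
have supA_fin : ereal_sup A \is a fin_num.
  rewrite ge0_fin_numE; last exact: ereal_sup_ubound.
  apply: le_lt_trans (_ : M < +oo); last by rewrite ltey.
  by apply: ge_ereal_sup => a Aa; rewrite -(adde0 a); apply: leM.
rewrite addeC -leeBrDr //; apply: ge_ereal_sup => b Bb.
rewrite leeBrDr // addeC -leeBrDr ?B_fin //; apply: ge_ereal_sup => a Aa.
by rewrite leeBrDr ?B_fin //; apply: leM.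
Qed.

End ereal_sup_add.

Section integral_without_measurability.
Local Open Scope ereal_scope.
Context d (T : measurableType d) (R : realType) (mu : {measure set T -> \bar R}).
Import HBNNSimple.

Lemma ge0_le_integralT (f g : T -> \bar R) :
  (forall x, 0 <= f x) -> (forall x, f x <= g x) ->
  \int[mu]_x f x <= \int[mu]_x g x.
Proof.
move=> f_ge0 le_fg; have g_ge0 x : 0 <= g x by apply: le_trans (le_fg x).
rewrite !ge0_integralTE //; apply: ereal_sup_le => _ [h /= le_hf <-].
by exists h => //= x; apply: le_trans (le_fg x).
Qed.

Lemma ge0_integralD_le (f g : T -> \bar R) :
  (forall x, 0 <= f x) -> (forall x, 0 <= g x) ->
  \int[mu]_x f x + \int[mu]_x g x <= \int[mu]_x (f x + g x).
Proof.
move=> f_ge0 g_ge0; rewrite !ge0_integralTE // => [|x]; last exact: adde_ge0.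
apply: ge0_ereal_supD_le.
- by exists nnsfun0 => //; apply: sintegral0.
- by exists nnsfun0 => //; apply: sintegral0.
- by move=> _ [h _ <-]; apply: sintegral_ge0.
- by move=> _ [h _ <-]; apply: sintegral_ge0.
move=> _ _ [h1 /= le_h1f <-] [h2 /= le_h2g <-].
rewrite -sintegralD; apply: ereal_sup_ubound; exists (add_nnsfun h1 h2) => //= x.
by rewrite EFinD; apply: leeD.
Qed.

End integral_without_measurability.

Section gauss_iter.
Local Open Scope ereal_scope.
Variable R : realType.
Implicit Types (k : nat) (f g : seq R -> \bar R).

Lemma gauss_iter_ge0 k f : (forall l, 0 <= f l) -> 0 <= gauss_iter k f.
Proof.
elim: k f => [|k IHk] f f_ge0 /=; first exact: f_ge0.
by apply: integral_ge0 => t _; apply: IHk.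
Qed.

Lemma gauss_iterD_le k f g : (forall l, 0 <= f l) -> (forall l, 0 <= g l) ->
  gauss_iter k f + gauss_iter k g <= gauss_iter k (fun l => f l + g l).
Proof.
elim: k f g => [|k IHk] f g f_ge0 g_ge0 //=.
apply: le_trans (ge0_integralD_le _ _ _) _ => [t|t|]; try exact: gauss_iter_ge0.
apply: ge0_le_integralT => t; last exact: IHk.
by apply: adde_ge0; apply: gauss_iter_ge0.
Qed.

Lemma gauss_iter_le1 k f : (forall l, 0 <= f l) -> (forall l, f l <= 1) ->
  gauss_iter k f <= 1.
Proof.
elim: k f => [|k IHk] f f_ge0 f_le1 //=.
apply: (@le_trans _ _ (\int[normal_prob 0 1]_t cst 1 t)).
  by apply: ge0_le_integralT => t; [apply: gauss_iter_ge0 | apply: IHk].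
by rewrite integral_cst // mul1e probability_le1.
Qed.

Lemma gauss_iter_sum_le k (I : Type) (s : seq I) (P : pred I) (F : I -> seq R -> \bar R) :
  (forall i l, 0 <= F i l) ->
  \sum_(i <- s | P i) gauss_iter k (F i) <=
  gauss_iter k (fun l => \sum_(i <- s | P i) F i l).
Proof.
move=> F_ge0; elim: s => [|i s IHs].
  by rewrite big_nil; apply: gauss_iter_ge0 => l; rewrite big_nil.
under [X in _ <= gauss_iter _ X]eq_fun do rewrite big_cons.
rewrite big_cons; case: (P i) => //.
apply: le_trans (leeD2l _ IHs) _; apply: gauss_iterD_le => // l.
exact: sume_ge0.
Qed.

End gauss_iter.

Lemma sum_eq_uniq_le1 (T : eqType) (v : T) (s : seq T) (P : pred T) :
  uniq s -> (\sum_(A <- s | P A) (v == A) <= 1)%N.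
Proof.
move=> s_uniq; rewrite (eq_bigr (fun A => if v == A then 1 else 0)%N); last first.
  by move=> A _; case: eqP.
rewrite -big_mkcondr sum1_count; apply: leq_trans (leq_b1 (v \in s)).
by rewrite -count_uniq_mem //; apply: sub_count => A /andP[_ /eqP->] /=.
Qed.

Section split_prob.
Local Open Scope ereal_scope.
Variables (R : realType) (n d : nat) (x : 'I_n -> 'rV[R]_d) (S : {set 'I_n}).

Lemma split_prob_ge0 A : 0 <= split_prob x S A.
Proof. by apply: gauss_iter_ge0 => l; rewrite lee_fin. Qed.

Lemma sum_split_prob_le1 (s : seq {set 'I_n}) (P : pred {set 'I_n}) :
  uniq s -> \sum_(A <- s | P A) split_prob x S A <= 1.
Proof.
move=> s_uniq; apply: le_trans (gauss_iter_sum_le _ _ _ _) _ => [A l|].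
  by rewrite lee_fin.
apply: gauss_iter_le1 => l; first by apply: sume_ge0 => A _; rewrite lee_fin.
by rewrite sumEFin lee_fin -natr_sum lern1 sum_eq_uniq_le1.
Qed.

End split_prob.

Lemma ge0_sume_mul_le (R : realType) (I : eqType) (s : seq I) (w : I -> \bar R)
    (c : \bar R) :
  (0 <= c)%E -> {in s, forall i, 0 <= w i}%E -> (\sum_(i <- s) w i <= 1)%E ->
  (\sum_(i <- s) c * w i <= c)%E.
Proof.
move=> c_ge0 w_ge0 sum_le1; rewrite big_seq -ge0_sume_distrr -?big_seq //.
by rewrite -[leRHS]mule1; apply: lee_wpmul2l.
Qed.

Section rtree_dist.
Local Open Scope ereal_scope.
Variables (R : realType) (n d : nat) (x : 'I_n -> 'rV[R]_d).

Variant rtree_dist_spec k (S : {set 'I_n}) : \bar R * tree 'I_n -> Prop :=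
| RtreeDistLeaf i of #|S| = 1%N : rtree_dist_spec k S (1, Leaf i)
| RtreeDistNode (A : {set 'I_n}) pt1 pt2 of A \subset S & pt1 \in rtree_dist x k A
    & pt2 \in rtree_dist x k (S :\: A) :
  rtree_dist_spec k S (split_prob x S A * pt1.1 * pt2.1, Node [:: pt1.2; pt2.2]).

Lemma mem_rtree_distP k S pt :
  pt \in rtree_dist x k.+1 S -> rtree_dist_spec k S pt.
Proof.
rewrite [rtree_dist _ _ _]/=; case: ifP => [/eqP S1|_].
  by case: pickP => // i _; rewrite inE => /eqP->; constructor.
move=> /flatten_mapP[A]; rewrite mem_filter mem_enum powersetE => /andP[_ sAS].
by move=> /allpairsPdep[pt1 [pt2 [pt1_in pt2_in ->]]]; constructor.
Qed.

Lemma rtree_dist_weight_ge0 k S : {in rtree_dist x k S, forall pt, 0 <= pt.1}.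
Proof.
elim: k S => [//|k IHk] S pt /mem_rtree_distP[i _|A pt1 pt2 _ pt1_in pt2_in] //=.
by rewrite mule_ge0 ?mule_ge0 ?split_prob_ge0 ?(IHk _ _ pt1_in) ?(IHk _ _ pt2_in).
Qed.

Lemma rtree_dist_size_leaves k S :
  {in rtree_dist x k S, forall pt, size (leaves pt.2) <= #|S|}%N.
Proof.
elim: k S => [//|k IHk] S pt /mem_rtree_distP[i /= -> //|A pt1 pt2 sAS pt1_in pt2_in].
have cardS : (#|A| + #|S :\: A|)%N = #|S|.
  by rewrite cardsD (finset.setIidPr sAS) subnKC // subset_leq_card.
by rewrite /= cats0 size_cat -cardS leq_add ?IHk.
Qed.

Lemma rtree_dist_mass_le1 k S : \sum_(pt <- rtree_dist x k S) pt.1 <= 1.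
Proof.
elim: k S => [|k IHk] S; first by rewrite big_nil.
rewrite [rtree_dist _ _ _]/=; case: ifP => _.
  by case: pickP => [i _|_]; rewrite ?big_seq1 ?big_nil.
rewrite big_flatten big_map big_filter /=.
apply: le_trans (sum_split_prob_le1 x S _ (enum_uniq _)); apply: lee_sum => A _.
rewrite big_allpairs_dep /=.
apply: le_trans (ge0_sume_mul_le (split_prob_ge0 x S A) _ (IHk A)); last first.
  exact: rtree_dist_weight_ge0.
rewrite [leLHS]big_seq [leRHS]big_seq; apply: lee_sum => pt1 pt1_in.
apply: ge0_sume_mul_le (IHk _); last exact: rtree_dist_weight_ge0.
by rewrite mule_ge0 ?split_prob_ge0 ?(rtree_dist_weight_ge0 pt1_in).
Qed.
End rtree_dist.

Section cost_bounds.
Variables (R : numDomainType) (n : nat) (C : 'I_n -> 'I_n -> R).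
Hypothesis C_ge0 : forall i j, 0 <= C i j.

Definition sim_sum := \sum_(i < n) \sum_(j < n | (i < j)%N) C i j.

Lemma sim_sum_ge0 : 0 <= sim_sum.
Proof. by apply: sumr_ge0 => i _; apply: sumr_ge0. Qed.

Lemma cost_le_sim_sum (m : nat) t :
  (size (leaves t) <= m)%N -> cost C t <= m%:R * sim_sum.
Proof.
move=> le_m; rewrite /cost /sim_sum mulr_sumr; apply: ler_sum => i _.
rewrite mulr_sumr; apply: ler_sum => j _; rewrite mulrC ler_wpM2r // ler_nat.
exact: leq_trans (lca_size_le_size_leaves i j t) le_m.
Qed.

Lemma sim_sum_le_cost t : hierarchy t -> sim_sum <= cost C t.
Proof.
move=> /andP[_ leaves_t]; apply: ler_sum => i _; apply: ler_sum => j _.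
rewrite ler_peMr // ler1n lca_size_gt0 //.
by rewrite (perm_mem leaves_t) mem_enum.
Qed.

End cost_bounds.

Theorem theorem6 (R : realType) :
  exists c : R, 0 < c /\
  forall (n d : nat) (x : 'I_n -> 'rV[R]_d),
    injective x ->
    (forall i, dot (x i) (x i) = 1) ->
    (forall i j, 0 <= dot (x i) (x j) <= 1) ->
    forall Tstar : tree 'I_n, hierarchy Tstar ->
    (forall T : tree 'I_n, hierarchy T -> cost (dotC x) Tstar <= cost (dotC x) T) ->
    (expected_cost x <= (c * n%:R * cost (dotC x) Tstar)%:E)%E.
Proof.
exists 1; split => // n d x _ _ C01 Tstar Tstar_hier _.
have C_ge0 i j : 0 <= dotC x i j by case/andP: (C01 i j).
rewrite /expected_cost; set dist := rtree_dist x n [set: 'I_n].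
apply: (@le_trans _ _ (\sum_(pt <- dist) (n%:R * sim_sum (dotC x))%:E * pt.1)%E).
  rewrite [leLHS]big_seq [leRHS]big_seq; apply: lee_sum => pt pt_in.
  rewrite [leRHS]muleC; apply: lee_wpmul2l; first exact: rtree_dist_weight_ge0 pt_in.
  rewrite lee_fin cost_le_sim_sum //.
  by have := rtree_dist_size_leaves pt_in; rewrite cardsT card_ord.
apply: le_trans (ge0_sume_mul_le _ _ (rtree_dist_mass_le1 x _ _)) _.
- by rewrite lee_fin mulr_ge0 ?sim_sum_ge0.
- exact: rtree_dist_weight_ge0.
by rewrite mul1r lee_fin ler_wpM2l // sim_sum_le_cost.
Qed.
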